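(* Let $f \in \mathbb{N}_0[x^{\pm 1}]$ be such that $f(1) = p + q$ for some prime numbers $p$ and $q$. Then $f$ can be written as the sum of two irreducible elements of $\mathbb{N}_0[x^{\pm 1}]$.
   Context: $\mathbb{N}_0[x^{\pm 1}]$ denotes the semiring of Laurent polynomials in $x$ with nonnegative integer coefficients. Its units are exactly the monomials $x^k$, $k \in \mathbb{Z}$. An element $f$ is irreducible if it is nonzero, not a unit, and whenever $f = gh$ with $g,h \in \mathbb{N}_0[x^{\pm 1}]$, one of $g,h$ is a unit. *)

From mathcomp Require Import all_boot all_algebra.
Set Implicit Arguments. Unset Strict Implicit. Unset Printing Implicit Defensive.
Local Open Scope ring_scope.

(* The semiring N_0[x^{+-1}] of Laurent polynomials with nonnegative integer
   coefficients, presented as the localization of N_0[x] = {poly nat} at x: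
   a pair (n, P) denotes the Laurent polynomial x^{-n} * P(x).
   Two representatives denote the same element iff x^m P = x^n Q. *)
Definition laurent := (nat * {poly nat})%type.

Definition leq_l (f g : laurent) : Prop := 'X^(g.1) * f.2 = 'X^(f.1) * g.2.

Definition ladd (f g : laurent) : laurent :=
  ((f.1 + g.1)%N, 'X^(g.1) * f.2 + 'X^(f.1) * g.2).

Definition lmul (f g : laurent) : laurent := ((f.1 + g.1)%N, f.2 * g.2).

Definition leval1 (f : laurent) : nat := f.2.[1].

Definition lunit (f : laurent) : Prop :=
  exists n j : nat, leq_l f (n, 'X^j).

Definition lzero (f : laurent) : Prop := f.2 = 0.

Definition lirreducible (f : laurent) : Prop :=
  ~ lzero f /\ ~ lunit f /\
  forall g h : laurent, leq_l f (lmul g h) -> lunit g \/ lunit h.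

(* Evaluation at x = 1 is multiplicative and takes the value 1 exactly on the
   monomials, since a polynomial with nonnegative integer coefficients summing
   to 1 is a power of x.  Hence every f with f(1) prime is irreducible.  As the
   coefficients of f sum to p + q, they can be shared out between g and h so
   that g(1) = p and h(1) = q. *)
From mathcomp Require Import all_boot all_algebra.

Set Implicit Arguments. Unset Strict Implicit. Unset Printing Implicit Defensive.
Import GRing.Theory.
Local Open Scope ring_scope.

Lemma prime_muln_eq1 (m n : nat) : prime (m * n) -> m = 1%N \/ n = 1%N.
Proof.
move=> pr_mn; have [m1 | m_neq1] := eqVneq m 1%N; first by left.
right; have m_gt0 : (0 < m)%N by move: (prime_gt0 pr_mn); rewrite muln_gt0 => /andP[].
have /(prime_nt_dvdP pr_mn m_neq1) mE : (m %| m * n)%N by apply: dvdn_mulr.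
by apply/eqP; rewrite -(eqn_pmul2l m_gt0) muln1 -mE.
Qed.

Lemma horner1_eq0 (A : {poly nat}) : A.[1] = 0%N -> A = 0.
Proof.
elim/poly_ind: A => [// | Q c IH]; rewrite hornerMXaddC mulr1.
move=> /eqP; rewrite addn_eq0 => /andP[/eqP /IH -> /eqP ->].
by rewrite mul0r add0r.
Qed.

Lemma horner1_eq1 (A : {poly nat}) : A.[1] = 1%N -> exists j, A = 'X^j.
Proof.
elim/poly_ind: A => [| Q c IH]; first by rewrite horner0.
rewrite hornerMXaddC mulr1 => /eqP; rewrite addn_eq1.
case/orP => /andP[/eqP Q1 /eqP ->].
- by have [j ->] := IH Q1; exists j.+1; rewrite addr0 exprSr.
- by rewrite (horner1_eq0 Q1); exists 0%N; rewrite mul0r add0r.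
Qed.

Lemma split_horner1 (P : {poly nat}) (k : nat) :
  (k <= P.[1])%N -> exists G H : {poly nat}, G + H = P /\ G.[1] = k.
Proof.
elim/poly_ind: P k => [| Q c IH] k.
  by rewrite horner0 leqn0 => /eqP ->; exists 0, 0; rewrite addr0 horner0.
rewrite hornerMXaddC mulr1 => k_le.
have [k_leQ | Q_ltk] := leqP k Q.[1].
  have [G [H [<- G1]]] := IH k k_leQ.
  exists (G * 'X), (H * 'X + c%:P); split; first by rewrite addrA -mulrDl.
  by rewrite hornerMX mulr1.
exists (Q * 'X + (k - Q.[1])%N%:P), ((c - (k - Q.[1]))%N%:P); split.
  rewrite -addrA -polyCD; congr (_ + _%:P); apply: subnKC.
  by rewrite leq_subLR.
by rewrite hornerMXaddC mulr1; apply: subnKC; apply: ltnW.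
Qed.

Lemma leval1M (g h : laurent) : leval1 (lmul g h) = (leval1 g * leval1 h)%N.
Proof. exact: hornerM. Qed.

Lemma leq_l_leval1 (f g : laurent) : leq_l f g -> leval1 f = leval1 g.
Proof.
by move/(congr1 (horner^~ 1)); rewrite !hornerM !hornerXn !expr1n !mul1r.
Qed.

Lemma lunitP (f : laurent) : lunit f <-> leval1 f = 1%N.
Proof.
split; first by case=> n [j /leq_l_leval1 ->]; rewrite /leval1 hornerXn expr1n.
case: f => m A; rewrite /leval1 /= => /horner1_eq1 [j ->].
by exists m, j; rewrite /leq_l mulrC.
Qed.

Lemma lirreducible_prime (f : laurent) : prime (leval1 f) -> lirreducible f.
Proof.
move=> pr_f; split; [| split].
- by rewrite /lzero => f0; move: pr_f; rewrite /leval1 f0 horner0.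
- by move/lunitP => f1; move: pr_f; rewrite f1.
- move=> g h /leq_l_leval1; rewrite leval1M => fE.
  by move: pr_f; rewrite fE => /prime_muln_eq1 [/lunitP | /lunitP]; [left | right].
Qed.

Theorem corollary2p2 (f : laurent) (p q : nat) :
  prime p -> prime q -> leval1 f = (p + q)%N ->
  exists g h : laurent, lirreducible g /\ lirreducible h /\ leq_l f (ladd g h).
Proof.
case: f => n P pr_p pr_q; rewrite /leval1 /= => P1.
have [G [H [GH G1]]] : exists G H : {poly nat}, G + H = P /\ G.[1] = p.
  by apply: split_horner1; rewrite P1 leq_addr.
have H1 : H.[1] = q.
  by apply/eqP; rewrite -(eqn_add2l p) -P1 -GH hornerD G1.
exists (n, G), (n, H); split; [| split].
- by apply: lirreducible_prime; rewrite /leval1 G1.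
- by apply: lirreducible_prime; rewrite /leval1 H1.
- by rewrite /leq_l /= -GH -mulrDr mulrA -exprD.
Qed.
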